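(* Let $n,t,k$ be positive integers with $2\leq k\leq n-2$, $1\leq t\leq\frac{n-k-4}{2}$ and $n\equiv k\pmod 2$. Then for every integer $s$ with $t+1\leq s\leq\frac{n-k-2}{2}$ and every $\alpha\in[0,\frac12]$, $$\rho_{\alpha}\big(K_{s}\vee(K_{n+1-2s-k}\cup\overline{K_{s+k-1}})\big)<\max\Big\{\rho_{\alpha}\big(K_{t}\vee(K_{n+1-2t-k}\cup\overline{K_{t+k-1}})\big),\ \rho_{\alpha}\big(K_{\frac{n-k}{2}}\vee\overline{K_{\frac{n+k}{2}}}\big)\Big\}.$$
   Context: For a graph $G$ with adjacency matrix $A(G)$ and diagonal degree matrix $D(G)$, and $\alpha\in[0,1]$, $A_{\alpha}(G)=\alpha D(G)+(1-\alpha)A(G)$ and $\rho_{\alpha}(G)$ is the largest eigenvalue of $A_{\alpha}(G)$. $K_m$ is the complete graph on $m$ vertices, $\overline{K_m}$ the edgeless graph on $m$ vertices, $\cup$ denotes disjoint union and $G_1\vee G_2$ the join (disjoint union plus all edges between $V(G_1)$ and $V(G_2)$). *)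

From HB Require Import structures.
From mathcomp Require Import all_boot all_order all_algebra.
From mathcomp Require Import reals.
Set Implicit Arguments. Unset Strict Implicit. Unset Printing Implicit Defensive.
Import Order.TTheory GRing.Theory Num.Theory.
Local Open Scope ring_scope.

(* A (simple) graph is an irreflexive symmetric relation on a finite vertex type. *)

Definition Kc (m : nat) : rel 'I_m := fun i j => i != j.
Definition Ke (m : nat) : rel 'I_m := fun _ _ => false.

Definition gunion (T U : finType) (e : rel T) (f : rel U) : rel (T + U)%type :=
  fun x y => match x, y with
             | inl a, inl b => e a b
             | inr a, inr b => f a b
             | _, _ => false
             end.

Definition gjoin (T U : finType) (e : rel T) (f : rel U) : rel (T + U)%type :=
  fun x y => match x, y with
             | inl a, inl b => e a b
             | inr a, inr b => f a b
             | _, _ => true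
             end.

Definition gdeg (T : finType) (e : rel T) (x : T) : nat := #|[set y | e x y]|.

(* A_alpha(G) = alpha D(G) + (1 - alpha) A(G), vertices numbered via enum_val *)
Definition Aalpha (R : pzRingType) (T : finType) (e : rel T) (alpha : R)
  : 'M[R]_#|T| :=
  \matrix_(i, j)
    (alpha * (if i == j then (gdeg e (enum_val i))%:R else 0)
     + (1 - alpha) * (e (enum_val i) (enum_val j))%:R).

Definition is_largest_eigenvalue (R : numFieldType) (m : nat) (M : 'M[R]_m) (r : R)
  : Prop :=
  eigenvalue M r /\ forall l : R, eigenvalue M l -> l <= r.
Arguments Kc : clear implicits.
Arguments Ke : clear implicits.

From HB Require Import structures.
From mathcomp Require Import all_boot all_order all_algebra.
From mathcomp Require Import reals.
From mathcomp Require Import ring lra zify.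
Import Order.TTheory GRing.Theory Num.Theory.
Local Open Scope ring_scope.
Set Implicit Arguments. Unset Strict Implicit. Unset Printing Implicit Defensive.

(* Each graph K_a \/ (K_b U \bar K_c) is partitioned into three cells on which A_alpha
   acts as the 3x3 quotient matrix Q with characteristic polynomial char3.  A root of
   char3 above the two lower diagonal entries of Q yields an eigenvector constant on the
   cells, and a point x where char3 is positive bounds every eigenvalue, by a
   Collatz-Wielandt argument applied to a slightly perturbed such vector.
   With n = k + 2m, the graph of parameter s has the polynomial Phi_s, which is cubic
   in s and at s = m is (x - alpha m) times the quotient polynomial Psi of
   K_m \/ \bar K_(m+k).  Interpolating linearly in s between t and m, the remainder is
   positive for alpha <= 1/2, so Phi_s > 0 from max(root of Phi_t, root of Psi) on. *)

Definition Aalpha_act (R : pzRingType) (T : finType) (e : rel T) (al : R)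
    (f : T -> R) (v : T) : R :=
  al * (gdeg e v)%:R * f v + (1 - al) * \sum_u f u * (e u v)%:R.

Lemma row_mul_Aalpha (R : comPzRingType) (T : finType) (e : rel T) (al : R)
    (f : T -> R) (v : T) :
  ((\row_i f (enum_val i)) *m Aalpha e al) 0 (enum_rank v) = Aalpha_act e al f v.
Proof.
rewrite !mxE; under eq_bigr do rewrite !mxE enum_rankK mulrDr.
rewrite big_split /= (bigD1 (enum_rank v)) //= eqxx enum_rankK big1 ?addr0; last first.
  by move=> i /negbTE ->; rewrite !mulr0.
congr (_ + _); first by ring.
rewrite mulr_sumr [RHS](big_enum_val (A := xpredT)) /=.
by apply: eq_bigr => i _; ring.
Qed.

Lemma Aalpha_eigenvalue (R : fieldType) (T : finType) (e : rel T) (al x : R)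
    (f : T -> R) (v0 : T) :
  f v0 != 0 -> (forall v, Aalpha_act e al f v = x * f v) ->
  eigenvalue (Aalpha e al) x.
Proof.
move=> fv0 eqf; apply/eigenvalueP; exists (\row_i f (enum_val i)).
  apply/rowP => j; rewrite -(enum_valK j) row_mul_Aalpha eqf !mxE.
  by rewrite enum_rankK.
apply: contraNneq fv0 => /rowP /(_ (enum_rank v0)).
by rewrite !mxE enum_rankK => ->.
Qed.

Lemma eigenvalue_lt_Collatz_Wielandt (R : realFieldType) (m : nat)
    (M : 'M[R]_m) (y : 'rV[R]_m) (x l : R) :
  (forall i j, 0 <= M i j) -> (forall j, 0 < y 0 j) ->
  (forall j, (y *m M) 0 j < x * y 0 j) -> eigenvalue M l -> l < x.
Proof.
move=> M_ge0 y_gt0 yM_lt /eigenvalueP [v vM v_neq0].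
have [j1 vj1] : exists j, v 0 j != 0.
  apply/existsP; apply: contraNT v_neq0; rewrite negb_exists => /forallP v0.
  by apply/eqP/rowP => j; rewrite mxE; apply/eqP; rewrite -[_ == _]negbK v0.
pose F j := `|v 0 j| / y 0 j.
have [j _ F_max] := @arg_maxP _ _ _ j1 xpredT F isT.
have c_gt0 : 0 < F j by apply: lt_le_trans (F_max j1 isT); rewrite divr_gt0 ?normr_gt0.
have vj : `|v 0 j| = F j * y 0 j by rewrite mulrVK // unitfE gt_eqF.
have key : `|l| * `|v 0 j| <= F j * (y *m M) 0 j.
  rewrite -normrM (_ : l * v 0 j = (v *m M) 0 j); last by rewrite vM !mxE.
  rewrite !mxE mulr_sumr; apply: le_trans (ler_norm_sum _ _ _) _.
  apply: ler_sum => i _; rewrite normrM (ger0_norm (M_ge0 _ _)) mulrA.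
  by apply: ler_wpM2r => //; rewrite -ler_pdivrMr //; exact: F_max.
have : `|l| * (F j * y 0 j) < x * (F j * y 0 j).
  by rewrite -vj; apply: le_lt_trans key _; rewrite vj mulrCA ltr_pM2l.
have Fy_gt0 : 0 < F j * y 0 j by rewrite mulr_gt0.
by rewrite ltr_pM2r // => /(le_lt_trans (ler_norm l)).
Qed.

Lemma Aalpha_ge0 (R : realDomainType) (T : finType) (e : rel T) (al : R) :
  0 <= al <= 1 -> forall i j, 0 <= Aalpha e al i j.
Proof.
move=> /andP [al_ge0 al_le1] i j; rewrite mxE.
by rewrite addr_ge0 ?mulr_ge0 ?subr_ge0 //; case: (i == j).
Qed.

Lemma Aalpha_eigenvalue_lt (R : realFieldType) (T : finType) (e : rel T)
    (al x l : R) (f : T -> R) :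
  0 <= al <= 1 -> (forall v, 0 < f v) -> (forall v, Aalpha_act e al f v < x * f v) ->
  eigenvalue (Aalpha e al) l -> l < x.
Proof.
move=> al01 f_gt0 f_lt; apply: (eigenvalue_lt_Collatz_Wielandt (y := \row_i f (enum_val i))).
- exact: Aalpha_ge0.
- by move=> j; rewrite mxE.
- by move=> j; rewrite -(enum_valK j) row_mul_Aalpha [X in _ < _ * X]mxE enum_rankK.
Qed.

Lemma gdeg_sum (R : pzSemiRingType) (T : finType) (e : rel T) (v : T) :
  ((gdeg e v)%:R : R) = \sum_u (e v u)%:R.
Proof.
rewrite /gdeg -sum1_card -natr_sum big_mkcond /=.
by congr _%:R; apply: eq_bigr => u _; rewrite inE; case: (e v u).
Qed.

Lemma sum_Kc_l (R : pzSemiRingType) (a : nat) (i : 'I_a) :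
  \sum_j ((Kc a i j)%:R : R) = (a.-1)%:R.
Proof.
rewrite (bigD1 i) //= /Kc eqxx add0r (eq_bigr (fun _ => 1)); last first.
  by move=> j; rewrite eq_sym => ->.
by rewrite sumr_const cardC1 card_ord.
Qed.

Lemma sum_Kc_r (R : pzSemiRingType) (a : nat) (i : 'I_a) :
  \sum_j ((Kc a j i)%:R : R) = (a.-1)%:R.
Proof. by rewrite -(sum_Kc_l R i); apply: eq_bigr => j _; rewrite /Kc eq_sym. Qed.

Lemma natr_pred (R : pzRingType) (a : nat) : 'I_a -> ((a.-1)%:R : R) = a%:R - 1.
Proof. by case: a => [[]//|a] _; rewrite -natr1 addrK. Qed.

Definition secular3 (R : pzRingType) (p q r w1 w2 x : R) : R :=
  (x - p) * (x - q) * (x - r) - w1 * (x - r) - w2 * (x - q).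
Definition secular2 (R : pzRingType) (p r w x : R) : R := (x - p) * (x - r) - w.

Lemma poly_root_gt (R : rcfType) (P : {poly R}) (a b : R) :
  a <= b -> P.[a] < 0 -> 0 <= P.[b] -> exists2 l, a < l & P.[l] = 0.
Proof.
move=> ab Pa Pb.
have Pab : P.[a] <= 0 <= P.[b] by rewrite (ltW Pa) Pb.
have [l /andP [al _] /eqP Pl] := poly_ivt ab Pab.
exists l => //; rewrite lt_neqAle al andbT; apply: contraTneq Pa => ->.
by rewrite Pl ltxx.
Qed.

Lemma secular3_root_gt (R : rcfType) (p q r w1 w2 : R) :
  r < q -> 0 < w1 -> 0 <= w2 -> exists2 l, q < l & secular3 p q r w1 w2 l = 0.
Proof.
move=> rq w1_gt0 w2_ge0.
pose P : {poly R} := ('X - p%:P) * ('X - q%:P) * ('X - r%:P)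
  - w1%:P * ('X - r%:P) - w2%:P * ('X - q%:P).
have PE y : P.[y] = secular3 p q r w1 w2 y by rewrite /P !hornerE.
set U := Num.max p q + w1 + w2 + 1.
have Uq : 1 <= U - q by rewrite /U; have := le_max q p q; lra.
have Ur : U - q <= U - r by lra.
have Up : w1 + w2 + 1 <= U - p by rewrite /U; have := le_max p p q; lra.
have cross : w1 + w2 + 1 <= (U - p) * (U - q).
  have : 0 <= (U - p) * (U - q - 1) by rewrite mulr_ge0; lra.
  lra.
have PU : 0 <= secular3 p q r w1 w2 U.
  have : 0 <= (U - r - (U - q)) * ((U - p) * (U - q) - w1) by rewrite mulr_ge0; lra.
  have : 0 <= (U - q) * ((U - p) * (U - q) - w1 - w2 - 1) by rewrite mulr_ge0; lra.
  rewrite /secular3; nra.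
have [l ql Pl] : exists2 l, q < l & P.[l] = 0.
  apply: (poly_root_gt (b := U)); rewrite ?PE //; first by lra.
  by rewrite /secular3 subrr !(mulr0, mul0r) sub0r subr0 oppr_lt0 mulr_gt0 ?subr_gt0.
by exists l; rewrite -?PE.
Qed.

Lemma secular2_root_gt (R : rcfType) (p r w : R) :
  r <= p -> 0 < w -> exists2 l, p < l & secular2 p r w l = 0.
Proof.
move=> rp w_gt0.
pose P : {poly R} := ('X - p%:P) * ('X - r%:P) - w%:P.
have PE y : P.[y] = secular2 p r w y by rewrite /P !hornerE.
have [l pl Pl] : exists2 l, p < l & P.[l] = 0.
  apply: (poly_root_gt (b := p + w + 1)); rewrite ?PE /secular2; first by lra.
    by rewrite subrr mul0r sub0r oppr_lt0.
  have : 0 <= (w + 1) * (p - r) by rewrite mulr_ge0; lra.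
  nra.
by exists l; rewrite -?PE.
Qed.

Lemma secular3_ge0 (R : realFieldType) (p q r w1 w2 l x : R) :
  r <= q -> q < l -> 0 <= w1 -> 0 <= w2 -> secular3 p q r w1 w2 l = 0 -> l <= x ->
  0 <= secular3 p q r w1 w2 x.
Proof.
move=> rq ql w1_ge0 w2_ge0 root lx.
set u := l - q; set v := l - r; set d := x - l.
have u_gt0 : 0 < u by rewrite subr_gt0.
have v_gt0 : 0 < v by rewrite /v; lra.
have d_ge0 : 0 <= d by rewrite subr_ge0.
have : u * v * secular3 p q r w1 w2 x = (u + d) * (v + d) * secular3 p q r w1 w2 l
    + d * ((u + d) * (v + d) * u * v + w1 * (v + d) * v + w2 * (u + d) * u).
  by rewrite /secular3 /u /v /d; ring.
rewrite root mulr0 add0r.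
have u_ge0 := ltW u_gt0; have v_ge0 := ltW v_gt0.
rewrite -(pmulr_rge0 _ (mulr_gt0 u_gt0 v_gt0)) => ->.
by rewrite mulr_ge0 // !addr_ge0 // !mulr_ge0 // addr_ge0.
Qed.

Lemma secular2_ge0 (R : realFieldType) (p r w l x : R) :
  r <= p -> p <= l -> secular2 p r w l = 0 -> l <= x -> 0 <= secular2 p r w x.
Proof.
move=> rp pl root lx.
have -> : secular2 p r w x = secular2 p r w l + (x - l) * (x + l - p - r).
  by rewrite /secular2; ring.
by rewrite root add0r mulr_ge0 //; lra.
Qed.

(* Diagonal entries of the quotient matrix of A_alpha(K_a \/ (K_b U \bar K_c)) over its
   cells, with A, B, C the cell sizes; the third one is al * A. *)
Definition qdiagA (R : pzRingType) (al A B C : R) : R :=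
  al * (A + B + C - 1) + (1 - al) * (A - 1).
Definition qdiagB (R : pzRingType) (al A B : R) : R :=
  al * (A + B - 1) + (1 - al) * (B - 1).

Lemma qdiagB_ge (R : realDomainType) (al A B : R) : 1 <= B -> al * A <= qdiagB al A B.
Proof. by move=> B_ge1; rewrite -subr_ge0 (_ : _ - _ = B - 1) ?subr_ge0 // /qdiagB; ring. Qed.

Lemma qdiagA_ge (R : realDomainType) (al A C : R) :
  0 <= al <= 1 -> 1 <= A -> 1 <= C -> al * A <= qdiagA al A 0 C.
Proof. by move=> /andP [? ?] ? ?; rewrite /qdiagA; nra. Qed.

(* The characteristic polynomial of that quotient matrix, and of the one of
   K_a \/ \bar K_c (the case B = 0). *)
Definition char3 (R : pzRingType) (al A B C x : R) : R :=
  secular3 (qdiagA al A B C) (qdiagB al A B) (al * A)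
    ((1 - al) ^+ 2 * A * B) ((1 - al) ^+ 2 * A * C) x.
Definition char2 (R : pzRingType) (al A C x : R) : R :=
  secular2 (qdiagA al A 0 C) (al * A) ((1 - al) ^+ 2 * A * C) x.

Definition join_KKE (a b c : nat) := gjoin (Kc a) (gunion (Kc b) (Ke c)).
Definition join_KE (a c : nat) := gjoin (Kc a) (Ke c).
Arguments join_KKE : clear implicits.
Arguments join_KE : clear implicits.

Definition cellfun3 (X : Type) (a b c : nat) (yA yB yC : X)
    (u : 'I_a + ('I_b + 'I_c)) : X :=
  match u with inl _ => yA | inr (inl _) => yB | inr (inr _) => yC end.
Definition cellfun2 (X : Type) (a c : nat) (yA yC : X) (u : 'I_a + 'I_c) : X :=
  match u with inl _ => yA | inr _ => yC end.

Section JoinKKE.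
Variables (R : comPzRingType) (a b c : nat) (al yA yB yC : R).
Let A : R := a%:R.
Let B : R := b%:R.
Let C : R := c%:R.
Let f := @cellfun3 R a b c yA yB yC.

Lemma Aalpha_act_join_KKE_A (i : 'I_a) :
  Aalpha_act (join_KKE a b c) al f (inl i) =
  qdiagA al A B C * yA + (1 - al) * (B * yB + C * yC).
Proof.
rewrite /Aalpha_act gdeg_sum !big_sumType /=.
rewrite -!mulr_sumr sum_Kc_l sum_Kc_r ?mulr1 !sumr_const !card_ord.
by rewrite (natr_pred _ i) /qdiagA /A /B /C; ring.
Qed.

Lemma Aalpha_act_join_KKE_B (i : 'I_b) :
  Aalpha_act (join_KKE a b c) al f (inr (inl i)) =
  qdiagB al A B * yB + (1 - al) * A * yA.
Proof.
rewrite /Aalpha_act gdeg_sum !big_sumType /=.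
rewrite -!mulr_sumr sum_Kc_l sum_Kc_r ?mulr1 ?mulr0 !sumr_const !card_ord.
by rewrite (natr_pred _ i) /qdiagB /A /B; ring.
Qed.

Lemma Aalpha_act_join_KKE_C (i : 'I_c) :
  Aalpha_act (join_KKE a b c) al f (inr (inr i)) = al * A * yC + (1 - al) * A * yA.
Proof.
rewrite /Aalpha_act gdeg_sum !big_sumType /=.
rewrite ?mulr1 ?mulr0 !sumr_const !card_ord.
by rewrite /A; ring.
Qed.
End JoinKKE.

Section JoinKE.
Variables (R : comPzRingType) (a c : nat) (al yA yC : R).
Let A : R := a%:R.
Let C : R := c%:R.
Let f := @cellfun2 R a c yA yC.

Lemma Aalpha_act_join_KE_A (i : 'I_a) :
  Aalpha_act (join_KE a c) al f (inl i) = qdiagA al A 0 C * yA + (1 - al) * (C * yC).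
Proof.
rewrite /Aalpha_act gdeg_sum !big_sumType /=.
rewrite -!mulr_sumr sum_Kc_l sum_Kc_r ?mulr1 !sumr_const !card_ord.
by rewrite (natr_pred _ i) /qdiagA /A /C; ring.
Qed.

Lemma Aalpha_act_join_KE_C (i : 'I_c) :
  Aalpha_act (join_KE a c) al f (inr i) = al * A * yC + (1 - al) * A * yA.
Proof.
rewrite /Aalpha_act gdeg_sum !big_sumType /=.
rewrite ?mulr1 ?mulr0 !sumr_const !card_ord.
by rewrite /A; ring.
Qed.
End JoinKE.

Lemma join_KKE_eigenvalue (R : fieldType) (a b c : nat) (al x : R) :
  (0 < a)%N -> x != qdiagB al a%:R b%:R -> x != al * a%:R ->
  char3 al a%:R b%:R c%:R x = 0 -> eigenvalue (Aalpha (join_KKE a b c) al) x.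
Proof.
set A : R := a%:R; set B : R := b%:R; set C : R := c%:R.
move=> a_gt0 xB xC char0.
have u0 : x - qdiagB al A B != 0 by rewrite subr_eq0.
have v0 : x - al * A != 0 by rewrite subr_eq0.
apply: (@Aalpha_eigenvalue _ _ _ _ _
  (cellfun3 1 ((1 - al) * A / (x - qdiagB al A B)) ((1 - al) * A / (x - al * A)))
  (inl (Ordinal a_gt0))); first exact: oner_neq0.
case=> [i|[i|i]] /=.
- rewrite Aalpha_act_join_KKE_A !mulr1.
  transitivity (x - char3 al A B C x / ((x - qdiagB al A B) * (x - al * A))).
    by rewrite /char3 /secular3; field; rewrite u0 v0.
  by rewrite char0 mul0r subr0.
- by rewrite Aalpha_act_join_KKE_B; field.
- by rewrite Aalpha_act_join_KKE_C; field.
Qed.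

Lemma join_KE_eigenvalue (R : fieldType) (a c : nat) (al x : R) :
  (0 < a)%N -> x != al * a%:R -> char2 al a%:R c%:R x = 0 ->
  eigenvalue (Aalpha (join_KE a c) al) x.
Proof.
set A : R := a%:R; set C : R := c%:R.
move=> a_gt0 xC char0.
have v0 : x - al * A != 0 by rewrite subr_eq0.
apply: (@Aalpha_eigenvalue _ _ _ _ _ (cellfun2 1 ((1 - al) * A / (x - al * A)))
  (inl (Ordinal a_gt0))); first exact: oner_neq0.
case=> [i|i] /=.
- rewrite Aalpha_act_join_KE_A !mulr1.
  transitivity (x - char2 al A C x / (x - al * A)).
    by rewrite /char2 /secular2; field.
  by rewrite char0 mul0r subr0.
- by rewrite Aalpha_act_join_KE_C; field.
Qed.

Lemma join_KKE_eigenvalue_lt (R : realFieldType) (a b c : nat) (al x l : R) :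
  0 <= al <= 1 -> (0 < b)%N -> qdiagB al a%:R b%:R < x ->
  0 < char3 al a%:R b%:R c%:R x -> eigenvalue (Aalpha (join_KKE a b c) al) l -> l < x.
Proof.
set A : R := a%:R; set B : R := b%:R; set C : R := c%:R.
move=> al01 b_gt0 xB char_gt0; have /andP [al_ge0 al_le1] := al01.
set u := x - qdiagB al A B; set v := x - al * A.
have u_gt0 : 0 < u by rewrite subr_gt0.
have v_gt0 : 0 < v by rewrite subr_gt0 (le_lt_trans (qdiagB_ge _ _ _) xB) // ler1n.
set d := char3 al A B C x / (u * v).
have d_gt0 : 0 < d by rewrite divr_gt0 ?mulr_gt0.
(* The exact B- and C-values (1-al)A/u and (1-al)A/v of an eigenvector are raised by
   eps, making the B and C rows strict; char3 x > 0 leaves room d for the A row. *)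
set k := (1 - al) * (B + C).
have k_ge0 : 0 <= k by rewrite mulr_ge0 ?subr_ge0 ?addr_ge0.
set eps := d / (k + 1).
have eps_gt0 : 0 < eps by rewrite divr_gt0 // ltr_wpDl.
have y0_ge0 w : 0 < w -> 0 <= (1 - al) * A / w.
  by move=> /ltW w_ge0; rewrite divr_ge0 ?mulr_ge0 ?subr_ge0 // /A.
have class_lt q w : 0 < w ->
    q * ((1 - al) * A / w + eps) + (1 - al) * A * 1 < (q + w) * ((1 - al) * A / w + eps).
  move=> w_gt0; rewrite -subr_gt0 (_ : _ - _ = w * eps); first exact: mulr_gt0.
  by field; rewrite gt_eqF.
apply: (@Aalpha_eigenvalue_lt _ _ _ _ _ _
  (cellfun3 1 ((1 - al) * A / u + eps) ((1 - al) * A / v + eps))) => //.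
  by case=> [i|[i|i]] /=; rewrite ?ltr01 // ltr_wpDl ?y0_ge0.
case=> [i|[i|i]] /=.
- rewrite Aalpha_act_join_KKE_A !mulr1.
  have -> : qdiagA al A B C + (1 - al) * (B * ((1 - al) * A / u + eps)
      + C * ((1 - al) * A / v + eps)) = x - d + k * eps.
    rewrite /d /char3 /secular3 -/u -/v /k.
    by field; rewrite !gt_eqF.
  rewrite -ltrBrDl opprB addrC subrK /eps mulrA ltr_pdivrMr ?ltr_wpDl //.
  by rewrite mulrDr mulr1 mulrC ltrDl.
- rewrite Aalpha_act_join_KKE_B (_ : x = qdiagB al A B + u) ?class_lt //.
  by rewrite /u addrC subrK.
- rewrite Aalpha_act_join_KKE_C (_ : x = al * A + v) ?class_lt //.
  by rewrite /v addrC subrK.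
Qed.

(* Phi al K M s and Psi al K M are char3 and char2 of K_s \/ (K_(2M+1-2s) U \bar K_(s+K-1))
   and of K_M \/ \bar K_(M+K): the graphs of the theorem for n = K + 2M. *)
Definition Phi (R : pzRingType) (al K M s x : R) : R :=
  char3 al s (2 * M + 1 - 2 * s) (s + K - 1) x.
Definition Psi (R : pzRingType) (al K M x : R) : R := char2 al M (M + K) x.

(* For s = M the middle cell is one isolated vertex: the graph is K_M \/ \bar K_(M+K). *)
Lemma Phi_top (R : comPzRingType) (al K M x : R) :
  Phi al K M M x = (x - al * M) * Psi al K M x.
Proof. by rewrite /Phi /Psi /char3 /char2 /secular3 /secular2 /qdiagA /qdiagB; ring. Qed.

(* Phi is cubic in s: linear interpolation between T and M, with its remainder. *)
Lemma Phi_interpolation (R : comPzRingType) (al K M T S x : R) :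
  (M - T) * Phi al K M S x = (M - S) * Phi al K M T x + (S - T) * Phi al K M M x
  + (M - T) * (S - T) * (M - S) * (x - qdiagA al M 0 (M + K)
      + (1 - al ^+ 2) * M + 2 * (1 - al) ^+ 2 * K + 3 * (1 - 2 * al) * (1 - al)
      + (2 - 3 * al) * (1 - al) * (S + T - 3)).
Proof. by rewrite /Phi /char3 /secular3 /qdiagA /qdiagB; ring. Qed.

Lemma Phi_root_gt (R : rcfType) (al K M T : R) :
  0 <= al < 1 -> 0 <= K -> 1 <= T -> T < M ->
  exists2 l, qdiagB al T (2 * M + 1 - 2 * T) < l & Phi al K M T l = 0.
Proof.
move=> /andP [al_ge0 al_lt1] K_ge0 T_ge1 TM.
have bal_gt0 : 0 < (1 - al) ^+ 2 by rewrite exprn_gt0 // subr_gt0.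
apply: secular3_root_gt.
- by rewrite /qdiagB; nra.
- by rewrite !mulr_gt0 //; lra.
- by rewrite !mulr_ge0 //; lra.
Qed.

Lemma Psi_root_gt (R : rcfType) (al K M : R) :
  0 <= al < 1 -> 0 <= K -> 1 <= M ->
  exists2 l, qdiagA al M 0 (M + K) < l & Psi al K M l = 0.
Proof.
move=> /andP [al_ge0 al_lt1] K_ge0 M_ge1.
have bal_gt0 : 0 < (1 - al) ^+ 2 by rewrite exprn_gt0 // subr_gt0.
apply: secular2_root_gt.
- by apply: qdiagA_ge; rewrite ?al_ge0 ?(ltW al_lt1) //; lra.
- by rewrite !mulr_gt0 //; lra.
Qed.

Lemma qdiagB_family_antimono (R : realDomainType) (al M T S : R) :
  al <= 1 -> T <= S -> qdiagB al S (2 * M + 1 - 2 * S) <= qdiagB al T (2 * M + 1 - 2 * T).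
Proof.
move=> al_le1 TS; rewrite -subr_ge0 (_ : _ - _ = (2 - al) * (S - T)).
  by rewrite mulr_ge0 // subr_ge0 //; lra.
by rewrite /qdiagB; ring.
Qed.

Lemma Phi_pos (R : realFieldType) (al K M T S l2 l3 x : R) :
  0 <= al <= 1 / 2 -> 0 <= K -> 1 <= T -> T + 1 <= S -> S + 1 <= M ->
  qdiagB al T (2 * M + 1 - 2 * T) < l2 -> Phi al K M T l2 = 0 ->
  qdiagA al M 0 (M + K) < l3 -> Psi al K M l3 = 0 ->
  l2 <= x -> l3 <= x -> 0 < Phi al K M S x.
Proof.
move=> /andP [al_ge0 al_le] K_ge0 T_ge1 TS SM l2_gt Phi_l2 l3_gt Psi_l3 l2x l3x.
have bal_ge0 : 0 <= (1 - al) ^+ 2 by rewrite exprn_ge0 // subr_ge0; lra.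
have PhiT_ge0 : 0 <= Phi al K M T x.
  apply: (secular3_ge0 _ l2_gt) => //.
  - by apply: qdiagB_ge; lra.
  - by rewrite !mulr_ge0 //; lra.
  - by rewrite !mulr_ge0 //; lra.
have qA_ge : al * M <= qdiagA al M 0 (M + K) by apply: qdiagA_ge; rewrite ?al_ge0 /=; lra.
have Psi_ge0 : 0 <= Psi al K M x by apply: (secular2_ge0 qA_ge (ltW l3_gt)).
have PhiM_ge0 : 0 <= Phi al K M M x by rewrite Phi_top mulr_ge0 // subr_ge0; lra.
have : 0 < (M - T) * Phi al K M S x.
  rewrite Phi_interpolation ltr_wpDl //.
    by rewrite addr_ge0 // mulr_ge0 // subr_ge0; lra.
  rewrite !mulr_gt0 // ?subr_gt0; try lra.
  have : 0 <= (2 - 3 * al) * (1 - al) * (S + T - 3) by apply: mulr_ge0; nra.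
  have : 0 <= (1 - 2 * al) * (1 - al) by apply: mulr_ge0; lra.
  have : 0 <= (1 - al) ^+ 2 * K by apply: mulr_ge0.
  have : 0 <= (1 - al ^+ 2) * M by apply: mulr_ge0; nra.
  lra.
by rewrite pmulr_rgt0 // subr_gt0; lra.
Qed.

Definition join_KKE_family (m k z : nat) := join_KKE z (2 * m + 1 - 2 * z) (z + k - 1).
Arguments join_KKE_family : clear implicits.

Lemma natr_family_sizes (R : comPzRingType) (m k z : nat) :
  (0 < z)%N -> (z <= m)%N ->
  ((2 * m + 1 - 2 * z)%:R : R) = 2 * m%:R + 1 - 2 * z%:R /\
  ((z + k - 1)%:R : R) = z%:R + k%:R - 1.
Proof.
move=> z_gt0 zm; split.
  by rewrite natrB ?natrD ?natrM; [ring | lia].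
by rewrite natrB ?natrD; [| lia].
Qed.

Lemma join_KKE_family_root (R : rcfType) (m k z : nat) (al : R) :
  0 <= al < 1 -> (0 < z < m)%N ->
  exists l, [/\ eigenvalue (Aalpha (join_KKE_family m k z) al) l,
    qdiagB al z%:R (2 * m%:R + 1 - 2 * z%:R) < l & Phi al k%:R m%:R z%:R l = 0].
Proof.
move=> al01 /andP [z_gt0 zm].
have [Bsize Csize] := natr_family_sizes R k z_gt0 (ltnW zm).
have z_ge1 : 1 <= z%:R :> R by rewrite ler1n.
have zm_R : z%:R < m%:R :> R by rewrite ltr_nat.
have [l l_gt Phi_l] := Phi_root_gt al01 (ler0n R k) z_ge1 zm_R.
exists l; split => //; apply: join_KKE_eigenvalue => //; rewrite ?Bsize ?Csize //.
  by rewrite gt_eqF.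
by rewrite gt_eqF // (le_lt_trans (qdiagB_ge _ _ _) l_gt) //; lra.
Qed.

Lemma join_KE_root (R : rcfType) (m k : nat) (al : R) :
  0 <= al < 1 -> (0 < m)%N ->
  exists l, [/\ eigenvalue (Aalpha (join_KE m (m + k)) al) l,
    qdiagA al m%:R 0 (m%:R + k%:R) < l & Psi al k%:R m%:R l = 0].
Proof.
move=> al01 m_gt0; have /andP [al_ge0 al_lt1] := al01.
have m_ge1 : 1 <= m%:R :> R by rewrite ler1n.
have [l l_gt Psi_l] := Psi_root_gt al01 (ler0n R k) m_ge1.
exists l; split => //; apply: join_KE_eigenvalue; rewrite ?natrD //.
by rewrite gt_eqF // (le_lt_trans (qdiagA_ge _ _ _) l_gt) // ?ler_wpDr // al_ge0 ltW.
Qed.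

Lemma join_KKE_family_eigenvalue_lt (R : realFieldType) (m k t s : nat) (al l2 l3 l : R) :
  0 <= al <= 1 / 2 -> (0 < t < s)%N -> (s < m)%N ->
  qdiagB al t%:R (2 * m%:R + 1 - 2 * t%:R) < l2 -> Phi al k%:R m%:R t%:R l2 = 0 ->
  qdiagA al m%:R 0 (m%:R + k%:R) < l3 -> Psi al k%:R m%:R l3 = 0 ->
  eigenvalue (Aalpha (join_KKE_family m k s) al) l -> l < Num.max l2 l3.
Proof.
move=> al_half /andP [t_gt0 ts] sm l2_gt Phi_l2 l3_gt Psi_l3.
have s_gt0 : (0 < s)%N by apply: leq_trans ts.
have b_gt0 : (0 < 2 * m + 1 - 2 * s)%N by lia.
have [Bsize Csize] := natr_family_sizes R k s_gt0 (ltnW sm).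
have /andP [al_ge0 al_le] := al_half.
have al01 : 0 <= al <= 1 by rewrite al_ge0 /=; lra.
have l2x : l2 <= Num.max l2 l3 by rewrite le_max lexx.
have l3x : l3 <= Num.max l2 l3 by rewrite le_max lexx orbT.
have ts_R : t%:R + 1 <= s%:R :> R by rewrite natr1 ler_nat.
apply: join_KKE_eigenvalue_lt => //; rewrite ?Bsize ?Csize //.
  apply: le_lt_trans (lt_le_trans l2_gt l2x).
  by apply: qdiagB_family_antimono; lra.
apply: (Phi_pos al_half (ler0n R k)) l2_gt Phi_l2 l3_gt Psi_l3 l2x l3x => //.
- by rewrite ler1n.
- by rewrite natr1 ler_nat.
Qed.

Unset Implicit Arguments.

Theorem lemma3p2 (R : realType) (n t k : nat) :
  (0 < t)%N -> (2 <= k)%N -> (k <= n - 2)%N -> (2 * t <= n - k - 4)%N ->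
  n = k %[mod 2] ->
  forall (s : nat) (alpha : R),
    (t + 1 <= s)%N -> (2 * s <= n - k - 2)%N ->
    0 <= alpha -> alpha <= 1 / 2 ->
    forall r1 r2 r3 : R,
      is_largest_eigenvalue
        (Aalpha (gjoin (Kc s) (gunion (Kc (n + 1 - 2 * s - k)) (Ke (s + k - 1)))) alpha) r1 ->
      is_largest_eigenvalue
        (Aalpha (gjoin (Kc t) (gunion (Kc (n + 1 - 2 * t - k)) (Ke (t + k - 1)))) alpha) r2 ->
      is_largest_eigenvalue
        (Aalpha (gjoin (Kc ((n - k) %/ 2)) (Ke ((n + k) %/ 2))) alpha) r3 ->
      r1 < Num.max r2 r3.
Proof.
move=> t_gt0 _ _ tnk nk s al ts snk al_ge0 al_le r1 r2 r3 [ev1 _] [_ max2] [_ max3].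
have [m n_eq] : exists m, n = (k + 2 * m)%N.
  by exists ((n - k) %/ 2)%N; move: nk tnk; rewrite /=; lia.
subst n.
have t_s : (0 < t < s)%N by rewrite t_gt0 -addn1.
have sm : (s < m)%N by lia.
have tm : (0 < t < m)%N by rewrite t_gt0; lia.
have m_gt0 : (0 < m)%N by lia.
have size_b z : (k + 2 * m + 1 - 2 * z - k = 2 * m + 1 - 2 * z)%N by lia.
have size_KE : ((k + 2 * m - k) %/ 2 = m /\ (k + 2 * m + k) %/ 2 = m + k)%N by lia.
clear nk tnk snk.
rewrite size_b in ev1; rewrite size_b in max2; case: size_KE max3 => -> -> max3.
have al_half : 0 <= al <= 1 / 2 by rewrite al_ge0.
have al01 : 0 <= al < 1 by rewrite al_ge0 /=; lra.
have [l2 [ev2 l2_gt Phi_l2]] := join_KKE_family_root k al01 tm.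
have [l3 [ev3 l3_gt Psi_l3]] := join_KE_root k al01 m_gt0.
apply: lt_le_trans (le_max2 (max2 _ ev2) (max3 _ ev3)).
exact: join_KKE_family_eigenvalue_lt al_half t_s sm l2_gt Phi_l2 l3_gt Psi_l3 ev1.
Qed.
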